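(* Let $X$ and $Y$ be $\mathfrak{Q}$-preordered $\mathfrak{Q}$-subsets. Then the following collections are pairwise in bijection: (a) $\mathfrak{Q}$-distributors from $X$ to $Y$; (b) $\mathfrak{Q}$-order-preserving maps $Y\to\mathsf{P}X$; (c) $\mathfrak{Q}$-order-preserving maps $X\to\mathsf{P}^{\dagger}Y$; (d) $\mathfrak{Q}$-polarities from $X$ to $Y$; (e) $\mathfrak{Q}$-axialities from $Y$ to $X$; (f) dual $\mathfrak{Q}$-axialities from $Y$ to $X$.
   Context: $(\mathfrak{Q},\&,e)$ is a non-trivial unital quantale (complete lattice with associative multiplication with unit $e$ preserving joins in each variable, $\bot<e$), implications $p\& q\le r\iff p\le r/ q\iff q\le p\backslash r$, $\mathcal{D}\mathfrak{Q}(p,q)=\{u\mid (u/ p)\& p=u=q\&(q\backslash u)\}$. A $\mathfrak{Q}$-subset is a set $X$ with $|\cdot|\colon X\to\mathfrak{Q}$; $\mathbf{1}_q$ is $\{*\}$ with $|*|=q$. A $\mathfrak{Q}$-relation from $X$ to $Y$ is a map $\phi\colon X\times Y\to\mathfrak{Q}$ with $\phi(x,y)\in\mathcal{D}\mathfrak{Q}(|x|,|y|)$, ordered pointwise; composition $(\psi\circ\phi)(x,z)=\bigvee_y(\psi(y,z)/|y|)\&\phi(x,y)$; $\xi\swarrow\phi$ is the largest $\psi'$ with $\psi'\circ\phi\le\xi$ and $\psi\searrow\xi$ the largest $\phi'$ with $\psi\circ\phi'\le\xi$. A $\mathfrak{Q}$-preordered $\mathfrak{Q}$-subset is a $\mathfrak{Q}$-subset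 $X$ with a $\mathfrak{Q}$-relation $1_X^{\natural}$ on $X$ with $\mathrm{id}_X\le 1_X^{\natural}$ ($\mathrm{id}_X(x,x)=|x|$, else $\bot$) and $1_X^{\natural}\circ 1_X^{\natural}\le 1_X^{\natural}$. A $\mathfrak{Q}$-order-preserving map $h\colon A\to B$ satisfies $|ha|=|a|$ and $1_A^{\natural}(a,a')\le 1_B^{\natural}(ha,ha')$; $h\le k$ means $|a|\le 1_B^{\natural}(ha,ka)$ for all $a$; a $\mathfrak{Q}$-Galois connection $h\dashv k$ means $1_A\le kh$ and $hk\le 1_B$. A $\mathfrak{Q}$-distributor from $X$ to $Y$ is a $\mathfrak{Q}$-relation $\phi$ with $1_Y^{\natural}\circ\phi\circ 1_X^{\natural}\le\phi$. $\mathsf{P}X$ consists of $\mathfrak{Q}$-relations $\mu$ from $X$ to some $\mathbf{1}_q$ with $\mu\circ 1_X^{\natural}\le\mu$, $|\mu|=q$, $\mathfrak{Q}$-preorder $1_{\mathsf{P}X}^{\natural}(\mu,\mu')=\mu'\swarrow\mu$; $\mathsf{P}^{\dagger}X$ consists of $\mathfrak{Q}$-relations $\lambda$ from some $\mathbf{1}_q$ to $X$ with $1_X^{\natural}\circ\lambda\le\lambda$, $|\lambda|=q$, $1_{\mathsf{P}^{\dagger}X}^{\natural}(\lambda,\lambda')=\lambda'\searrow\lambda$. A $\mathfrak{Q}$-polarity from $X$ to $Y$ is a $\mathfrak{Q}$-Galois connection $f\dashv g$ with $f\colon\mathsf{P}X\to\mathsf{P}^{\dagger}Y$, $g\colon\mathsf{P}^{\dagger}Y\to\mathsf{P}X$;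 a $\mathfrak{Q}$-axiality from $Y$ to $X$ is a $\mathfrak{Q}$-Galois connection $f\dashv g$ with $f\colon\mathsf{P}Y\to\mathsf{P}X$, $g\colon\mathsf{P}X\to\mathsf{P}Y$; a dual $\mathfrak{Q}$-axiality from $Y$ to $X$ is a $\mathfrak{Q}$-Galois connection $f\dashv g$ with $f\colon\mathsf{P}^{\dagger}Y\to\mathsf{P}^{\dagger}X$, $g\colon\mathsf{P}^{\dagger}X\to\mathsf{P}^{\dagger}Y$. *)

Set Implicit Arguments.
Unset Strict Implicit.

Record Quantale := {
  qcar :> Type;
  qle : qcar -> qcar -> Prop;
  qle_refl : forall a, qle a a;
  qle_trans : forall a b c, qle a b -> qle b c -> qle a c;
  qle_antisym : forall a b, qle a b -> qle b a -> a = b;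
  qsup : (qcar -> Prop) -> qcar;
  qsup_ub : forall (S : qcar -> Prop) a, S a -> qle a (qsup S);
  qsup_least : forall (S : qcar -> Prop) b,
      (forall a, S a -> qle a b) -> qle (qsup S) b;
  qmul : qcar -> qcar -> qcar;
  qe : qcar;
  qmulA : forall a b c, qmul a (qmul b c) = qmul (qmul a b) c;
  qmul1l : forall a, qmul qe a = a;
  qmulr1 : forall a, qmul a qe = a;
  qmul_supl : forall (S : qcar -> Prop) b,
      qmul (qsup S) b = qsup (fun c => exists a, S a /\ c = qmul a b);
  qmul_supr : forall a (S : qcar -> Prop),
      qmul a (qsup S) = qsup (fun c => exists b, S b /\ c = qmul a b)
}.

Section QDefs.
Variable Q : Quantale.

Definition qbot : Q := @qsup Q (fun _ => False).
Definition qlt (a b : Q) : Prop := qle a b /\ a <> b.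

Definition qrdiv (r q : Q) : Q := qsup (fun p => qle (qmul p q) r).
Definition qldiv (p r : Q) : Q := qsup (fun q => qle (qmul p q) r).

Definition DQ (p q u : Q) : Prop :=
  qmul (qrdiv u p) p = u /\ u = qmul q (qldiv q u).

Record QSubset := { qs_car :> Type; qs_ext : qs_car -> Q }.

Definition one (q : Q) : QSubset := {| qs_car := unit; qs_ext := fun _ => q |}.

Definition is_Qrel (X Y : QSubset) (phi : X -> Y -> Q) : Prop :=
  forall x y, DQ (qs_ext x) (qs_ext y) (phi x y).

Definition rle (X Y : QSubset) (phi psi : X -> Y -> Q) : Prop :=
  forall x y, qle (phi x y) (psi x y).

Definition comp (X Y Z : QSubset) (psi : Y -> Z -> Q) (phi : X -> Y -> Q)
  : X -> Z -> Q :=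
  fun x z => qsup (fun c => exists y : Y,
     c = qmul (qrdiv (psi y z) (qs_ext y)) (phi x y)).

(* identity relation: id(x,x) = |x|, bot otherwise *)
Definition idrel (X : QSubset) : X -> X -> Q :=
  fun x x' => qsup (fun c => x = x' /\ c = qs_ext x).

Definition swarrow (X Y Z : QSubset) (xi : X -> Z -> Q) (phi : X -> Y -> Q)
  : Y -> Z -> Q :=
  fun y z => qsup (fun c => exists psi' : Y -> Z -> Q,
     is_Qrel psi' /\ rle (comp psi' phi) xi /\ c = psi' y z).

Definition searrow (X Y Z : QSubset) (psi : Y -> Z -> Q) (xi : X -> Z -> Q)
  : X -> Y -> Q :=
  fun x y => qsup (fun c => exists phi' : X -> Y -> Q,
     is_Qrel phi' /\ rle (comp psi phi') xi /\ c = phi' x y).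

Definition is_Qpreorder (X : QSubset) (r : X -> X -> Q) : Prop :=
  is_Qrel r /\ rle (@idrel X) r /\ rle (comp r r) r.

Record QPreord := { qp_set :> QSubset; qp_rel : qp_set -> qp_set -> Q;
                    qp_ok : is_Qpreorder qp_rel }.

Definition Qmono (A B : QSubset) (rA : A -> A -> Q) (rB : B -> B -> Q)
  (h : A -> B) : Prop :=
  (forall a, qs_ext (h a) = qs_ext a) /\
  (forall a a', qle (rA a a') (rB (h a) (h a'))).

Definition Qmap_le (A B : QSubset) (rB : B -> B -> Q) (h k : A -> B) : Prop :=
  forall a, qle (qs_ext a) (rB (h a) (k a)).

Definition Qgalois (A B : QSubset) (rA : A -> A -> Q) (rB : B -> B -> Q)
  (h : A -> B) (k : B -> A) : Prop :=
  Qmono rA rB h /\ Qmono rB rA k /\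
  Qmap_le rA (fun a => a) (fun a => k (h a)) /\
  Qmap_le rB (fun b => h (k b)) (fun b => b).

Definition is_distributor (X Y : QPreord) (phi : X -> Y -> Q) : Prop :=
  is_Qrel phi /\ rle (comp (@qp_rel Y) (comp phi (@qp_rel X))) phi.

(* an element: q together with a Q-relation mu from X to 1_q,
   mu o 1_X <= mu ;  |mu| = q *)
Definition PX_car (X : QPreord) : Type :=
  { q : Q & { mu : X -> one q -> Q |
      is_Qrel mu /\ rle (comp mu (@qp_rel X)) mu } }.

Definition PX (X : QPreord) : QSubset :=
  {| qs_car := PX_car X; qs_ext := fun m => projT1 m |}.

Definition PX_mu (X : QPreord) (m : PX X) : X -> one (projT1 m) -> Q :=
  proj1_sig (projT2 m).

Definition PX_rel (X : QPreord) : PX X -> PX X -> Q :=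
  fun m m' => swarrow (@PX_mu X m') (@PX_mu X m) tt tt.

Definition PdX_car (X : QPreord) : Type :=
  { q : Q & { lam : one q -> X -> Q |
      is_Qrel lam /\ rle (comp (@qp_rel X) lam) lam } }.

Definition PdX (X : QPreord) : QSubset :=
  {| qs_car := PdX_car X; qs_ext := fun l => projT1 l |}.

Definition PdX_lam (X : QPreord) (l : PdX X) : one (projT1 l) -> X -> Q :=
  proj1_sig (projT2 l).

Definition PdX_rel (X : QPreord) : PdX X -> PdX X -> Q :=
  fun l l' => searrow (@PdX_lam X l') (@PdX_lam X l) tt tt.

Definition Distributors (X Y : QPreord) : Type :=
  { phi : X -> Y -> Q | is_distributor phi }.

Definition MonoToP (X Y : QPreord) : Type :=
  { h : Y -> PX X | Qmono (@qp_rel Y) (@PX_rel X) h }.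

Definition MonoToPd (X Y : QPreord) : Type :=
  { h : X -> PdX Y | Qmono (@qp_rel X) (@PdX_rel Y) h }.

Definition Polarities (X Y : QPreord) : Type :=
  { fg : (PX X -> PdX Y) * (PdX Y -> PX X) |
      Qgalois (@PX_rel X) (@PdX_rel Y) (fst fg) (snd fg) }.

Definition Axialities (Y X : QPreord) : Type :=
  { fg : (PX Y -> PX X) * (PX X -> PX Y) |
      Qgalois (@PX_rel Y) (@PX_rel X) (fst fg) (snd fg) }.

Definition DualAxialities (Y X : QPreord) : Type :=
  { fg : (PdX Y -> PdX X) * (PdX X -> PdX Y) |
      Qgalois (@PdX_rel Y) (@PdX_rel X) (fst fg) (snd fg) }.

End QDefs.

Definition InBij (A B : Type) : Prop :=
  exists (f : A -> B) (g : B -> A),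
    (forall a, g (f a) = a) /\ (forall b, f (g b) = b).

(* A distributor [phi : X -> Y] is the same thing as the family of its columns
   [phi(-, y)] in [P X], or of its rows [phi(x, -)] in [P^dagger Y], and
   Q-monotonicity of such a family is exactly the closure of [phi] under
   composition with [1_X] (resp. [1_Y]); this identifies (a), (b) and (c).
   The residuals of composition turn [phi] into three Q-Galois connections:
   [phi swarrow -] -| [- searrow phi] (a polarity), [- o phi] -| [- swarrow phi]
   (an axiality) and [phi searrow -] -| [phi o -] (a dual axiality).
   Conversely, by the Yoneda lemma the (co)representables detect equality in
   [P X] and [P^dagger X], and both are separated, so adjoints are unique: a
   Q-Galois connection is determined by the restriction of one adjoint along the
   Yoneda embedding, which is a map of type (b) or (c) and gives back [phi]. *)

From Stdlib Require Import Setoid FunctionalExtensionality ProofIrrelevance.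

Lemma sig_irrelevant {T : Type} {P : T -> Prop} (u v : sig P) :
  proj1_sig u = proj1_sig v -> u = v.
Proof. apply eq_sig_hprop. intros. apply proof_irrelevance. Qed.

Lemma InBij_intro {A B : Type} (f : A -> B) (g : B -> A) :
  (forall a, g (f a) = a) -> (forall b, f (g b) = b) -> InBij A B.
Proof. intros H1 H2. exists f, g. split; assumption. Qed.

Lemma InBij_sym {A B : Type} : InBij A B -> InBij B A.
Proof. intros [f [g [H1 H2]]]. exact (InBij_intro g f H2 H1). Qed.

Lemma InBij_trans {A B C : Type} : InBij A B -> InBij B C -> InBij A C.
Proof.
  intros [f [g [H1 H2]]] [f' [g' [H1' H2']]].
  apply (InBij_intro (fun a => f' (f a)) (fun c => g (g' c))).
  - intro a. rewrite H1'. apply H1.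
  - intro c. rewrite H2. apply H2'.
Qed.

Section Quantale.
Variable Q : Quantale.
Implicit Types a b c p q r u v : Q.

Local Infix "<=" := (@qle Q).
Local Infix "*" := (@qmul Q).
Local Infix "/" := (@qrdiv Q).

Lemma qsup_pair a b : a <= b -> qsup (fun c => c = a \/ c = b) = b.
Proof.
  intro Hab. apply qle_antisym.
  - apply qsup_least. intros c [-> | ->]; [exact Hab | apply qle_refl].
  - apply qsup_ub. now right.
Qed.

Lemma qmul_le_l a b c : a <= b -> a * c <= b * c.
Proof.
  intro Hab. rewrite <- (qsup_pair _ _ Hab), qmul_supl.
  apply qsup_ub. exists a. auto.
Qed.

Lemma qmul_le_r a b c : a <= b -> c * a <= c * b.
Proof.
  intro Hab. rewrite <- (qsup_pair _ _ Hab), qmul_supr.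
  apply qsup_ub. exists a. auto.
Qed.

Lemma le_qrdiv p q r : p * q <= r -> p <= r / q.
Proof. intro H. now apply qsup_ub. Qed.

Lemma le_qldiv p q r : p * q <= r -> q <= qldiv p r.
Proof. intro H. now apply qsup_ub. Qed.

Lemma qrdiv_counit r q : r / q * q <= r.
Proof.
  unfold qrdiv. rewrite qmul_supl. apply qsup_least. intros c [a [Ha ->]]. exact Ha.
Qed.

Lemma qldiv_counit q r : q * qldiv q r <= r.
Proof.
  unfold qldiv. rewrite qmul_supr. apply qsup_least. intros c [a [Ha ->]]. exact Ha.
Qed.

Lemma qrdiv_le a b q : a <= b -> a / q <= b / q.
Proof. intro Hab. apply le_qrdiv. eapply qle_trans; [apply qrdiv_counit | exact Hab]. Qed.

Lemma qldiv_le a b q : a <= b -> qldiv q a <= qldiv q b.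
Proof. intro Hab. apply le_qldiv. eapply qle_trans; [apply qldiv_counit | exact Hab]. Qed.

Lemma qmul_qrdiv a b q : a * (b / q) <= (a * b) / q.
Proof. apply le_qrdiv. rewrite <- qmulA. apply qmul_le_r, qrdiv_counit. Qed.

Lemma qldiv_qmul a b q : qldiv q a * b <= qldiv q (a * b).
Proof. apply le_qldiv. rewrite qmulA. apply qmul_le_l, qldiv_counit. Qed.

Lemma le_qrdiv_mul p c u : p <= c -> u <= c / p * u.
Proof.
  intro Hpc. rewrite <- (qmul1l u) at 1. apply qmul_le_l, le_qrdiv.
  rewrite qmul1l. exact Hpc.
Qed.

Definition rdivisible p u := u / p * p = u.
Definition ldivisible q u := q * qldiv q u = u.

Lemma DQ_iff p q u : DQ p q u <-> rdivisible p u /\ ldivisible q u.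
Proof. unfold DQ, rdivisible, ldivisible. split; intros [H1 H2]; auto. Qed.

Lemma rdivisible_qsup p (S : Q -> Prop) :
  (forall s, S s -> rdivisible p s) -> rdivisible p (qsup S).
Proof.
  unfold rdivisible. intro HS. apply qle_antisym; [apply qrdiv_counit |].
  apply qsup_least. intros s Hs. rewrite <- (HS s Hs).
  apply qmul_le_l, qrdiv_le, qsup_ub, Hs.
Qed.

Lemma ldivisible_qsup q (S : Q -> Prop) :
  (forall s, S s -> ldivisible q s) -> ldivisible q (qsup S).
Proof.
  unfold ldivisible. intro HS. apply qle_antisym; [apply qldiv_counit |].
  apply qsup_least. intros s Hs. rewrite <- (HS s Hs).
  apply qmul_le_r, qldiv_le, qsup_ub, Hs.
Qed.

Lemma rdivisible_mul p a u : rdivisible p u -> rdivisible p (a * u).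
Proof.
  unfold rdivisible. intro Hu. apply qle_antisym; [apply qrdiv_counit |].
  rewrite <- Hu at 1. rewrite qmulA. apply qmul_le_l, qmul_qrdiv.
Qed.

Lemma ldivisible_mul q u b : ldivisible q u -> ldivisible q (u * b).
Proof.
  unfold ldivisible. intro Hu. apply qle_antisym; [apply qldiv_counit |].
  rewrite <- Hu at 1. rewrite <- qmulA. apply qmul_le_r, qldiv_qmul.
Qed.

Lemma rdivisible_self q : rdivisible q q.
Proof.
  apply qle_antisym; [apply qrdiv_counit |]. apply le_qrdiv_mul, qle_refl.
Qed.

Lemma ldivisible_self q : ldivisible q q.
Proof.
  apply qle_antisym; [apply qldiv_counit |].
  rewrite <- (qmulr1 q) at 1. apply qmul_le_r, le_qldiv. rewrite qmulr1. apply qle_refl.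
Qed.

Lemma DQ_self q : DQ q q q.
Proof. apply DQ_iff. split; [apply rdivisible_self | apply ldivisible_self]. Qed.

Lemma qrdiv_mul_qldiv q u v :
  rdivisible q u -> ldivisible q v -> u / q * v = u * qldiv q v.
Proof.
  unfold rdivisible, ldivisible. intros Hu Hv.
  rewrite <- Hv at 1. rewrite qmulA, Hu. reflexivity.
Qed.

Lemma qrdiv_self_mul q v : ldivisible q v -> q / q * v = v.
Proof.
  intro Hv. rewrite qrdiv_mul_qldiv; [exact Hv | apply rdivisible_self | exact Hv].
Qed.

Lemma rdivisible_le_mul p c u : rdivisible p u -> p <= c -> u <= u / p * c.
Proof. unfold rdivisible. intros Hu Hpc. rewrite <- Hu at 1. apply qmul_le_r, Hpc. Qed.

Local Notation ext := qs_ext.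
Local Notation pmu m := (@PX_mu _ _ m).
Local Notation plam l := (@PdX_lam _ _ l).

Lemma Qrel_rdivisible {X Y : QSubset Q} (phi : X -> Y -> Q) x y :
  is_Qrel phi -> rdivisible (ext x) (phi x y).
Proof. intro Hphi. exact (proj1 (proj1 (DQ_iff _ _ _) (Hphi x y))). Qed.

Lemma Qrel_ldivisible {X Y : QSubset Q} (phi : X -> Y -> Q) x y :
  is_Qrel phi -> ldivisible (ext y) (phi x y).
Proof. intro Hphi. exact (proj2 (proj1 (DQ_iff _ _ _) (Hphi x y))). Qed.

Section Composition.
Context {X Y Z : QSubset Q}.

Lemma le_comp (psi : Y -> Z -> Q) (phi : X -> Y -> Q) x y z :
  psi y z / ext y * phi x y <= comp psi phi x z.
Proof. apply qsup_ub. now exists y. Qed.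

Lemma comp_le (psi : Y -> Z -> Q) (phi : X -> Y -> Q) x z c :
  (forall y, psi y z / ext y * phi x y <= c) -> comp psi phi x z <= c.
Proof. intro H. apply qsup_least. intros s [y ->]. apply H. Qed.

Lemma comp_mono_l (psi psi' : Y -> Z -> Q) (phi : X -> Y -> Q) :
  rle psi psi' -> rle (comp psi phi) (comp psi' phi).
Proof.
  intros H x z. apply comp_le. intro y. eapply qle_trans; [| apply le_comp].
  apply qmul_le_l, qrdiv_le, H.
Qed.

Lemma comp_mono_r (psi : Y -> Z -> Q) (phi phi' : X -> Y -> Q) :
  rle phi phi' -> rle (comp psi phi) (comp psi phi').
Proof.
  intros H x z. apply comp_le. intro y. eapply qle_trans; [| apply le_comp].
  apply qmul_le_r, H.
Qed.

Lemma comp_rdivisible (psi : Y -> Z -> Q) (phi : X -> Y -> Q) x z :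
  is_Qrel phi -> rdivisible (ext x) (comp psi phi x z).
Proof.
  intro Hphi. apply rdivisible_qsup. intros s [y ->].
  apply rdivisible_mul, Qrel_rdivisible, Hphi.
Qed.

Lemma comp_Qrel (psi : Y -> Z -> Q) (phi : X -> Y -> Q) :
  is_Qrel psi -> is_Qrel phi -> is_Qrel (comp psi phi).
Proof.
  intros Hpsi Hphi x z. apply DQ_iff. split.
  - apply comp_rdivisible, Hphi.
  - apply ldivisible_qsup. intros s [y ->].
    rewrite qrdiv_mul_qldiv by (apply Qrel_rdivisible || apply Qrel_ldivisible; assumption).
    apply ldivisible_mul, Qrel_ldivisible, Hpsi.
Qed.

Lemma swarrow_Qrel (xi : X -> Z -> Q) (phi : X -> Y -> Q) : is_Qrel (swarrow xi phi).
Proof.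
  intros y z. apply DQ_iff. split.
  - apply rdivisible_qsup. intros s [psi [Hpsi [_ ->]]]. apply Qrel_rdivisible, Hpsi.
  - apply ldivisible_qsup. intros s [psi [Hpsi [_ ->]]]. apply Qrel_ldivisible, Hpsi.
Qed.

Lemma searrow_Qrel (psi : Y -> Z -> Q) (xi : X -> Z -> Q) : is_Qrel (searrow psi xi).
Proof.
  intros x y. apply DQ_iff. split.
  - apply rdivisible_qsup. intros s [phi [Hphi [_ ->]]]. apply Qrel_rdivisible, Hphi.
  - apply ldivisible_qsup. intros s [phi [Hphi [_ ->]]]. apply Qrel_ldivisible, Hphi.
Qed.

Lemma le_swarrow (xi : X -> Z -> Q) (phi : X -> Y -> Q) (psi : Y -> Z -> Q) :
  is_Qrel psi -> rle (comp psi phi) xi -> rle psi (swarrow xi phi).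
Proof. intros Hpsi H y z. apply qsup_ub. now exists psi. Qed.

Lemma le_searrow (psi : Y -> Z -> Q) (xi : X -> Z -> Q) (phi : X -> Y -> Q) :
  is_Qrel phi -> rle (comp psi phi) xi -> rle phi (searrow psi xi).
Proof. intros Hphi H x y. apply qsup_ub. now exists phi. Qed.

(* Since [phi] is a Q-relation, [s / ext y * phi x y = s * qldiv (ext y) (phi x y)],
   and in this form the join defining [swarrow] distributes. *)
Lemma comp_swarrow_le (xi : X -> Z -> Q) (phi : X -> Y -> Q) :
  is_Qrel phi -> rle (comp (swarrow xi phi) phi) xi.
Proof.
  intros Hphi x z. apply comp_le. intro y.
  rewrite qrdiv_mul_qldiv
    by (apply Qrel_rdivisible, swarrow_Qrel || apply Qrel_ldivisible, Hphi).
  unfold swarrow at 1. rewrite qmul_supl.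
  apply qsup_least. intros s [c [[psi [Hpsi [Hle ->]]] ->]].
  rewrite <- qrdiv_mul_qldiv by (apply Qrel_rdivisible, Hpsi || apply Qrel_ldivisible, Hphi).
  eapply qle_trans; [apply le_comp | apply Hle].
Qed.

Lemma comp_searrow_le (psi : Y -> Z -> Q) (xi : X -> Z -> Q) :
  rle (comp psi (searrow psi xi)) xi.
Proof.
  intros x z. apply comp_le. intro y. unfold searrow. rewrite qmul_supr.
  apply qsup_least. intros s [c [[phi [Hphi [Hle ->]]] ->]].
  eapply qle_trans; [apply le_comp | apply Hle].
Qed.

End Composition.

Lemma rle_refl {X Y : QSubset Q} (phi : X -> Y -> Q) : rle phi phi.
Proof. intros x y. apply qle_refl. Qed.

Lemma rle_trans {X Y : QSubset Q} (phi psi chi : X -> Y -> Q) :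
  rle phi psi -> rle psi chi -> rle phi chi.
Proof. intros H1 H2 x y. eapply qle_trans; [apply H1 | apply H2]. Qed.

Lemma comp_assoc {W X Y Z : QSubset Q}
  (psi : Y -> Z -> Q) (phi : X -> Y -> Q) (chi : W -> X -> Q) :
  is_Qrel phi -> is_Qrel chi ->
  forall w z, comp psi (comp phi chi) w z = comp (comp psi phi) chi w z.
Proof.
  intros Hphi Hchi w z. apply qle_antisym.
  - apply comp_le. intro y. unfold comp at 1. rewrite qmul_supr.
    apply qsup_least. intros s [c [[x ->] ->]].
    rewrite qmulA. eapply qle_trans; [| apply le_comp with (y := x)].
    apply qmul_le_l. eapply qle_trans; [apply qmul_qrdiv | apply qrdiv_le, le_comp].
  - apply comp_le. intro x.
    rewrite qrdiv_mul_qldiv by (apply comp_rdivisible || apply Qrel_ldivisible; assumption).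
    unfold comp at 1. rewrite qmul_supl. apply qsup_least. intros s [c [[y ->] ->]].
    rewrite <- qmulA, <- qrdiv_mul_qldiv
      by (apply Qrel_rdivisible || apply Qrel_ldivisible; assumption).
    eapply qle_trans; [| apply le_comp with (y := y)].
    apply qmul_le_r, le_comp.
Qed.

Lemma comp_assoc_le {W X Y Z : QSubset Q}
  (psi : Y -> Z -> Q) (phi : X -> Y -> Q) (chi : W -> X -> Q) :
  is_Qrel phi -> is_Qrel chi -> rle (comp psi (comp phi chi)) (comp (comp psi phi) chi).
Proof. intros Hphi Hchi w z. rewrite comp_assoc by assumption. apply qle_refl. Qed.

Lemma comp_assoc_ge {W X Y Z : QSubset Q}
  (psi : Y -> Z -> Q) (phi : X -> Y -> Q) (chi : W -> X -> Q) :
  is_Qrel phi -> is_Qrel chi -> rle (comp (comp psi phi) chi) (comp psi (comp phi chi)).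
Proof. intros Hphi Hchi w z. rewrite comp_assoc by assumption. apply qle_refl. Qed.

Section Residuals.
Context {W X Y Z : QSubset Q}.

Lemma swarrow_comp (xi : X -> Z -> Q) (psi : X -> Y -> Q) (phi : X -> W -> Q) :
  is_Qrel psi -> is_Qrel phi ->
  rle (comp (swarrow xi psi) (swarrow psi phi)) (swarrow xi phi).
Proof.
  intros Hpsi Hphi. apply le_swarrow; [apply comp_Qrel; apply swarrow_Qrel |].
  eapply rle_trans; [apply comp_assoc_ge; [apply swarrow_Qrel | exact Hphi] |].
  eapply rle_trans; [apply comp_mono_r, comp_swarrow_le, Hphi |].
  apply comp_swarrow_le, Hpsi.
Qed.

Lemma searrow_comp (psi : Y -> Z -> Q) (chi : W -> Z -> Q) (xi : X -> Z -> Q) :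
  rle (comp (searrow psi chi) (searrow chi xi)) (searrow psi xi).
Proof.
  apply le_searrow; [apply comp_Qrel; apply searrow_Qrel |].
  eapply rle_trans; [apply comp_assoc_le; apply searrow_Qrel |].
  eapply rle_trans; [apply comp_mono_l, comp_searrow_le |].
  apply comp_searrow_le.
Qed.

End Residuals.

Section Closure.
Context {W X Y : QSubset Q}.
Variable r : X -> X -> Q.
Hypothesis Hr : is_Qrel r.

Lemma comp_closed_l (psi : Y -> X -> Q) (phi : W -> Y -> Q) :
  is_Qrel psi -> is_Qrel phi -> rle (comp r psi) psi ->
  rle (comp r (comp psi phi)) (comp psi phi).
Proof.
  intros Hpsi Hphi H.
  eapply rle_trans; [apply comp_assoc_le; assumption | apply comp_mono_l, H].
Qed.

Lemma comp_closed_r (psi : Y -> W -> Q) (phi : X -> Y -> Q) :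
  is_Qrel phi -> rle (comp phi r) phi -> rle (comp (comp psi phi) r) (comp psi phi).
Proof.
  intros Hphi H.
  eapply rle_trans; [apply comp_assoc_ge; assumption | apply comp_mono_r, H].
Qed.

Lemma swarrow_closed_l (xi : Y -> X -> Q) (phi : Y -> W -> Q) :
  is_Qrel phi -> rle (comp r xi) xi -> rle (comp r (swarrow xi phi)) (swarrow xi phi).
Proof.
  intros Hphi H. apply le_swarrow; [apply comp_Qrel; [exact Hr | apply swarrow_Qrel] |].
  eapply rle_trans; [apply comp_assoc_ge; [apply swarrow_Qrel | exact Hphi] |].
  eapply rle_trans; [apply comp_mono_r, comp_swarrow_le, Hphi | exact H].
Qed.

Lemma swarrow_closed_r (xi : Y -> W -> Q) (phi : Y -> X -> Q) :
  is_Qrel phi -> rle (comp r phi) phi -> rle (comp (swarrow xi phi) r) (swarrow xi phi).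
Proof.
  intros Hphi H. apply le_swarrow; [apply comp_Qrel; [apply swarrow_Qrel | exact Hr] |].
  eapply rle_trans; [apply comp_assoc_ge; [exact Hr | exact Hphi] |].
  eapply rle_trans; [apply comp_mono_r, H |].
  apply comp_swarrow_le, Hphi.
Qed.

Lemma searrow_closed_l (psi : X -> Y -> Q) (xi : W -> Y -> Q) :
  rle (comp psi r) psi -> rle (comp r (searrow psi xi)) (searrow psi xi).
Proof.
  intro H. apply le_searrow; [apply comp_Qrel; [exact Hr | apply searrow_Qrel] |].
  eapply rle_trans; [apply comp_assoc_le; [exact Hr | apply searrow_Qrel] |].
  eapply rle_trans; [apply comp_mono_l, H |].
  apply comp_searrow_le.
Qed.

Lemma searrow_closed_r (psi : Y -> W -> Q) (xi : X -> W -> Q) :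
  rle (comp xi r) xi -> rle (comp (searrow psi xi) r) (searrow psi xi).
Proof.
  intro H. apply le_searrow; [apply comp_Qrel; [apply searrow_Qrel | exact Hr] |].
  eapply rle_trans; [apply comp_assoc_le; [apply searrow_Qrel | exact Hr] |].
  eapply rle_trans; [apply comp_mono_l, comp_searrow_le | exact H].
Qed.

End Closure.

Section Adjunctions.
Context {X Y Z : QSubset Q}.

Lemma le_searrow_swarrow (xi : X -> Z -> Q) (phi : X -> Y -> Q) :
  is_Qrel phi -> rle phi (searrow (swarrow xi phi) xi).
Proof. intro Hphi. apply le_searrow, comp_swarrow_le; exact Hphi. Qed.

Lemma le_swarrow_searrow (psi : Y -> Z -> Q) (xi : X -> Z -> Q) :
  is_Qrel psi -> rle psi (swarrow xi (searrow psi xi)).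
Proof. intro Hpsi. apply le_swarrow; [exact Hpsi | apply comp_searrow_le]. Qed.

Lemma le_swarrow_comp (psi : Y -> Z -> Q) (phi : X -> Y -> Q) :
  is_Qrel psi -> rle psi (swarrow (comp psi phi) phi).
Proof. intro Hpsi. apply le_swarrow; [exact Hpsi | apply rle_refl]. Qed.

Lemma le_searrow_comp (psi : Y -> Z -> Q) (phi : X -> Y -> Q) :
  is_Qrel phi -> rle phi (searrow psi (comp psi phi)).
Proof. intro Hphi. apply le_searrow; [exact Hphi | apply rle_refl]. Qed.

End Adjunctions.

Lemma swarrow_le_comp {W X Y Z : QSubset Q}
  (xi : Y -> W -> Q) (psi : Y -> Z -> Q) (phi : X -> Y -> Q) :
  is_Qrel psi -> is_Qrel phi -> rle (swarrow xi psi) (swarrow (comp xi phi) (comp psi phi)).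
Proof.
  intros Hpsi Hphi. apply le_swarrow; [apply swarrow_Qrel |].
  eapply rle_trans; [apply comp_assoc_le; assumption |].
  apply comp_mono_l, comp_swarrow_le, Hpsi.
Qed.

Lemma searrow_le_comp {W X Y Z : QSubset Q}
  (chi : Y -> W -> Q) (psi : Z -> Y -> Q) (xi : X -> Y -> Q) :
  is_Qrel psi -> rle (searrow psi xi) (searrow (comp chi psi) (comp chi xi)).
Proof.
  intro Hpsi. apply le_searrow; [apply searrow_Qrel |].
  eapply rle_trans; [apply comp_assoc_ge; [exact Hpsi | apply searrow_Qrel] |].
  apply comp_mono_r, comp_searrow_le.
Qed.

Definition separated {A : QSubset Q} (r : A -> A -> Q) : Prop :=
  forall x x' : A, ext x = ext x' -> ext x <= r x x' -> ext x' <= r x' x -> x = x'.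

Section Preorder.
Context {X : QSubset Q} (r : X -> X -> Q).

Lemma Qpreorder_intro :
  is_Qrel r -> (forall x, ext x <= r x x) -> rle (comp r r) r -> is_Qpreorder r.
Proof.
  intros Hr Hrefl Htrans. split; [exact Hr | split; [| exact Htrans]].
  intros x x'. apply qsup_least. intros c [<- ->]. apply Hrefl.
Qed.

Hypothesis Hr : is_Qpreorder r.

Lemma Qpreorder_Qrel : is_Qrel r.
Proof. apply Hr. Qed.

Lemma Qpreorder_refl x : ext x <= r x x.
Proof. eapply qle_trans; [| apply (proj1 (proj2 Hr))]. apply qsup_ub. auto. Qed.

Lemma Qpreorder_trans : rle (comp r r) r.
Proof. apply Hr. Qed.

Lemma Qpreorder_trans_at x x' x'' : r x' x'' / ext x' * r x x' <= r x x''.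
Proof. eapply qle_trans; [apply le_comp | apply Qpreorder_trans]. Qed.

Lemma le_comp_Qpreorder_l {W : QSubset Q} (phi : W -> X -> Q) : rle phi (comp r phi).
Proof.
  intros w x. eapply qle_trans; [| apply le_comp with (y := x)].
  apply le_qrdiv_mul, Qpreorder_refl.
Qed.

Lemma le_comp_Qpreorder_r {W : QSubset Q} (phi : X -> W -> Q) :
  is_Qrel phi -> rle phi (comp phi r).
Proof.
  intros Hphi x w. eapply qle_trans; [| apply le_comp with (y := x)].
  apply rdivisible_le_mul; [apply Qrel_rdivisible, Hphi | apply Qpreorder_refl].
Qed.

End Preorder.

Section Presheaves.
Variable X : QPreord Q.
Local Notation rX := (@qp_rel _ X).

Lemma qp_Qrel : is_Qrel rX.
Proof. exact (Qpreorder_Qrel _ (qp_ok X)). Qed.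

Definition PX_of {q} (mu : X -> one q -> Q) (Hmu : is_Qrel mu)
  (Hcl : rle (comp mu rX) mu) : PX X := existT _ q (exist _ mu (conj Hmu Hcl)).

Definition PdX_of {q} (lam : one q -> X -> Q) (Hlam : is_Qrel lam)
  (Hcl : rle (comp rX lam) lam) : PdX X := existT _ q (exist _ lam (conj Hlam Hcl)).

Lemma PX_Qrel (m : PX X) : is_Qrel (pmu m).
Proof. exact (proj1 (proj2_sig (projT2 m))). Qed.

Lemma PX_closed (m : PX X) : rle (comp (pmu m) rX) (pmu m).
Proof. exact (proj2 (proj2_sig (projT2 m))). Qed.

Lemma PdX_Qrel (l : PdX X) : is_Qrel (plam l).
Proof. exact (proj1 (proj2_sig (projT2 l))). Qed.

Lemma PdX_closed (l : PdX X) : rle (comp rX (plam l)) (plam l).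
Proof. exact (proj2 (proj2_sig (projT2 l))). Qed.

Lemma PX_eq (m m' : PX X) :
  projT1 m = projT1 m' -> (forall x, pmu m x tt = pmu m' x tt) -> m = m'.
Proof.
  destruct m as [q [mu H]], m' as [q' [mu' H']]. simpl. intros <- Hmu.
  assert (mu = mu') as <-.
  { apply functional_extensionality. intro x.
    apply functional_extensionality. intros []. apply Hmu. }
  f_equal. apply sig_irrelevant. reflexivity.
Qed.

Lemma PdX_eq (l l' : PdX X) :
  projT1 l = projT1 l' -> (forall x, plam l tt x = plam l' tt x) -> l = l'.
Proof.
  destruct l as [q [lam H]], l' as [q' [lam' H']]. simpl. intros <- Hlam.
  assert (lam = lam') as <-.
  { apply functional_extensionality. intros [].
    apply functional_extensionality. apply Hlam. }
  f_equal. apply sig_irrelevant. reflexivity.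
Qed.

Lemma PX_rel_mul_le (m m' : PX X) x : PX_rel m m' / projT1 m * pmu m x tt <= pmu m' x tt.
Proof.
  eapply qle_trans; [apply (le_comp (swarrow (pmu m') (pmu m)) (pmu m) x tt tt) |].
  apply comp_swarrow_le, PX_Qrel.
Qed.

Lemma PdX_rel_mul_le (l l' : PdX X) x : plam l' tt x / projT1 l' * PdX_rel l l' <= plam l tt x.
Proof.
  eapply qle_trans; [apply (le_comp (plam l') (searrow (plam l') (plam l)) tt tt x) |].
  apply comp_searrow_le.
Qed.

Lemma PX_le_iff (m m' : PX X) : projT1 m = projT1 m' ->
  projT1 m <= PX_rel m m' <-> (forall x, pmu m x tt <= pmu m' x tt).
Proof.
  intro E. split.
  - intros H x. eapply qle_trans; [| apply PX_rel_mul_le].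
    apply le_qrdiv_mul, H.
  - intro H. refine (le_swarrow (pmu m') (pmu m) (fun _ _ => projT1 m) _ _ tt tt).
    + intros t t'. change (DQ (projT1 m) (projT1 m') (projT1 m)). rewrite <- E. apply DQ_self.
    + intros x []. apply comp_le. intros [].
      rewrite qrdiv_self_mul by apply (Qrel_ldivisible (pmu m) x tt (PX_Qrel m)). apply H.
Qed.

Lemma PdX_le_iff (l l' : PdX X) : projT1 l = projT1 l' ->
  projT1 l <= PdX_rel l l' <-> (forall x, plam l' tt x <= plam l tt x).
Proof.
  intro E. split.
  - intros H x. eapply qle_trans; [| apply PdX_rel_mul_le].
    apply rdivisible_le_mul; [apply (Qrel_rdivisible (plam l') tt x (PdX_Qrel l')) |].
    eapply qle_trans; [| exact H]. rewrite E. apply qle_refl.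
  - intro H. refine (le_searrow (plam l') (plam l) (fun _ _ => projT1 l) _ _ tt tt).
    + intros t t'. change (DQ (projT1 l) (projT1 l') (projT1 l)). rewrite <- E. apply DQ_self.
    + intros [] x. apply comp_le. intros [].
      change (plam l' tt x / projT1 l' * projT1 l <= plam l tt x). rewrite E.
      eapply qle_trans; [apply qrdiv_counit | apply H].
Qed.

Lemma PX_Qpreorder : is_Qpreorder (@PX_rel _ X).
Proof.
  apply Qpreorder_intro.
  - intros m m'. exact (swarrow_Qrel (pmu m') (pmu m) tt tt).
  - intro m. apply PX_le_iff; [reflexivity | intro; apply qle_refl].
  - intros m m''. apply comp_le. intro m'.
    eapply qle_trans;
      [apply (le_comp (swarrow (pmu m'') (pmu m')) (swarrow (pmu m') (pmu m)) tt tt tt) |].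
    apply swarrow_comp; apply PX_Qrel.
Qed.

Lemma PdX_Qpreorder : is_Qpreorder (@PdX_rel _ X).
Proof.
  apply Qpreorder_intro.
  - intros l l'. exact (searrow_Qrel (plam l') (plam l) tt tt).
  - intro l. apply PdX_le_iff; [reflexivity | intro; apply qle_refl].
  - intros l l''. apply comp_le. intro l'.
    eapply qle_trans;
      [apply (le_comp (searrow (plam l'') (plam l')) (searrow (plam l') (plam l)) tt tt tt) |].
    apply searrow_comp.
Qed.

Lemma PX_separated : separated (@PX_rel _ X).
Proof.
  intros m m' E H H'. apply PX_eq; [exact E |]. intro x. apply qle_antisym.
  - revert x. apply PX_le_iff; assumption.
  - revert x. apply PX_le_iff; [symmetry |]; assumption.
Qed.

Lemma PdX_separated : separated (@PdX_rel _ X).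
Proof.
  intros l l' E H H'. apply PdX_eq; [exact E |]. intro x. apply qle_antisym.
  - revert x. apply PdX_le_iff; [symmetry |]; assumption.
  - revert x. apply PdX_le_iff; assumption.
Qed.


Definition yo (x : X) : PX X :=
  PX_of (fun x' (_ : one (ext x)) => rX x' x)
    (fun x' _ => qp_Qrel x' x) (fun x'' _ => Qpreorder_trans _ (qp_ok X) x'' x).

Definition coyo (x : X) : PdX X :=
  PdX_of (fun (_ : one (ext x)) x' => rX x x')
    (fun _ x' => qp_Qrel x x') (fun _ x'' => Qpreorder_trans _ (qp_ok X) x x'').

Lemma swarrow_yo {Z : QSubset Q} (xi : X -> Z -> Q) x t z :
  is_Qrel xi -> rle (comp xi rX) xi -> swarrow xi (pmu (yo x)) t z = xi x z.
Proof.
  intros Hxi Hcl. apply qle_antisym.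
  - eapply qle_trans; [| apply (comp_swarrow_le xi (pmu (yo x)) (PX_Qrel (yo x)) x z)].
    eapply qle_trans; [| apply le_comp with (y := t)].
    apply rdivisible_le_mul; [apply (Qrel_rdivisible _ t z), swarrow_Qrel |].
    exact (Qpreorder_refl _ (qp_ok X) x).
  - refine (le_swarrow xi (pmu (yo x)) (fun _ z => xi x z) _ _ t z).
    + intros t' z'. apply Hxi.
    + intros x' z'. apply comp_le. intros [].
      eapply qle_trans; [apply (le_comp xi rX x' x z') | apply Hcl].
Qed.

Lemma searrow_coyo {W : QSubset Q} (xi : W -> X -> Q) x w t :
  is_Qrel xi -> rle (comp rX xi) xi -> searrow (plam (coyo x)) xi w t = xi w x.
Proof.
  intros Hxi Hcl. apply qle_antisym.
  - eapply qle_trans; [| apply (comp_searrow_le (plam (coyo x)) xi w x)].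
    eapply qle_trans; [| apply le_comp with (y := t)].
    apply le_qrdiv_mul. exact (Qpreorder_refl _ (qp_ok X) x).
  - refine (le_searrow (plam (coyo x)) xi (fun w _ => xi w x) _ _ w t).
    + intros w' t'. apply Hxi.
    + intros w' x'. apply comp_le. intros [].
      eapply qle_trans; [apply (le_comp rX xi w' x x') | apply Hcl].
Qed.

Lemma yoneda x (m : PX X) : PX_rel (yo x) m = pmu m x tt.
Proof. apply swarrow_yo; [apply PX_Qrel | apply PX_closed]. Qed.

Lemma coyoneda x (l : PdX X) : PdX_rel l (coyo x) = plam l tt x.
Proof. apply searrow_coyo; [apply PdX_Qrel | apply PdX_closed]. Qed.

Lemma yo_Qmono : Qmono rX (@PX_rel _ X) yo.
Proof. split; [reflexivity |]. intros x x'. rewrite yoneda. apply qle_refl. Qed.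

Lemma coyo_Qmono : Qmono rX (@PdX_rel _ X) coyo.
Proof. split; [reflexivity |]. intros x x'. rewrite coyoneda. apply qle_refl. Qed.

Lemma PX_eq_yo (m m' : PX X) :
  projT1 m = projT1 m' -> (forall x, PX_rel (yo x) m = PX_rel (yo x) m') -> m = m'.
Proof. intros E H. apply PX_eq; [exact E |]. intro x. rewrite <- !yoneda. apply H. Qed.

Lemma PdX_eq_coyo (l l' : PdX X) :
  projT1 l = projT1 l' -> (forall x, PdX_rel l (coyo x) = PdX_rel l' (coyo x)) -> l = l'.
Proof. intros E H. apply PdX_eq; [exact E |]. intro x. rewrite <- !coyoneda. apply H. Qed.

Lemma comp_yo {W : QSubset Q} (phi : W -> X -> Q) w x t :
  rle (comp rX phi) phi -> comp (pmu (yo x)) phi w t = phi w x.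
Proof.
  intro Hcl. apply qle_antisym; [apply Hcl | exact (le_comp_Qpreorder_l _ (qp_ok X) phi w x)].
Qed.

Lemma comp_coyo {W : QSubset Q} (phi : X -> W -> Q) x t w :
  is_Qrel phi -> rle (comp phi rX) phi -> comp phi (plam (coyo x)) t w = phi x w.
Proof.
  intros Hphi Hcl. apply qle_antisym; [apply Hcl |].
  exact (le_comp_Qpreorder_r _ (qp_ok X) phi Hphi x w).
Qed.

End Presheaves.

Lemma Qmono_comp {A B C : QSubset Q} {rA : A -> A -> Q} {rB : B -> B -> Q}
  {rC : C -> C -> Q} {h : A -> B} {k : B -> C} :
  Qmono rA rB h -> Qmono rB rC k -> Qmono rA rC (fun x => k (h x)).
Proof.
  intros [Eh Mh] [Ek Mk]. split.
  - intro a. rewrite Ek. apply Eh.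
  - intros a a'. eapply qle_trans; [apply Mh | apply Mk].
Qed.

Section Galois.
Context {A B : QSubset Q} {rA : A -> A -> Q} {rB : B -> B -> Q}.
Hypotheses (HA : is_Qpreorder rA) (HB : is_Qpreorder rB).

Lemma Qgalois_adj {f g} : Qgalois rA rB f g -> forall (a : A) (b : B), rA a (g b) = rB (f a) b.
Proof.
  intros [[Ef Mf] [[Eg Mg] [Hunit Hcounit]]] a b. apply qle_antisym.
  - eapply qle_trans; [apply Mf |].
    eapply qle_trans; [| apply (Qpreorder_trans_at _ HB)].
    apply le_qrdiv_mul. rewrite Ef, Eg. apply Hcounit.
  - eapply qle_trans; [apply Mg |].
    eapply qle_trans; [| apply (Qpreorder_trans_at _ HA)].
    apply rdivisible_le_mul; [apply Qrel_rdivisible, (Qpreorder_Qrel _ HA) |].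
    rewrite Eg, Ef. apply Hunit.
Qed.

Lemma Qgalois_left_unique {f f' g} :
  separated rB -> Qgalois rA rB f g -> Qgalois rA rB f' g -> f = f'.
Proof.
  intros SB H H'. apply functional_extensionality. intro a.
  pose proof H as [[Ef _] [_ [Hunit _]]]. pose proof H' as [[Ef' _] [_ [Hunit' _]]].
  apply SB.
  - rewrite Ef, Ef'. reflexivity.
  - rewrite <- (Qgalois_adj H), Ef. apply Hunit'.
  - rewrite <- (Qgalois_adj H'), Ef'. apply Hunit.
Qed.

Lemma Qgalois_right_unique {f g g'} :
  separated rA -> Qgalois rA rB f g -> Qgalois rA rB f g' -> g = g'.
Proof.
  intros SA H H'. apply functional_extensionality. intro b.
  pose proof H as [_ [[Eg _] [_ Hcounit]]]. pose proof H' as [_ [[Eg' _] [_ Hcounit']]].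
  apply SA.
  - rewrite Eg, Eg'. reflexivity.
  - rewrite (Qgalois_adj H'), Eg. apply Hcounit.
  - rewrite (Qgalois_adj H), Eg'. apply Hcounit'.
Qed.

Lemma Qgalois_eq_of_left_on {I : Type} (rep : I -> A) {f g f' g'} :
  (forall a a' : A, ext a = ext a' -> (forall i, rA (rep i) a = rA (rep i) a') -> a = a') ->
  separated rB -> Qgalois rA rB f g -> Qgalois rA rB f' g' ->
  (forall i, f (rep i) = f' (rep i)) -> f = f' /\ g = g'.
Proof.
  intros Hrep SB H H' E.
  assert (g = g') as <-.
  { apply functional_extensionality. intro b. apply Hrep.
    - rewrite (proj1 (proj1 (proj2 H)) b), (proj1 (proj1 (proj2 H')) b). reflexivity.
    - intro i. rewrite (Qgalois_adj H), (Qgalois_adj H'), E. reflexivity. }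
  split; [exact (Qgalois_left_unique SB H H') | reflexivity].
Qed.

Lemma Qgalois_eq_of_right_on {J : Type} (rep : J -> B) {f g f' g'} :
  (forall b b' : B, ext b = ext b' -> (forall j, rB b (rep j) = rB b' (rep j)) -> b = b') ->
  separated rA -> Qgalois rA rB f g -> Qgalois rA rB f' g' ->
  (forall j, g (rep j) = g' (rep j)) -> f = f' /\ g = g'.
Proof.
  intros Hrep SA H H' E.
  assert (f = f') as <-.
  { apply functional_extensionality. intro a. apply Hrep.
    - rewrite (proj1 (proj1 H) a), (proj1 (proj1 H') a). reflexivity.
    - intro j. rewrite <- (Qgalois_adj H), <- (Qgalois_adj H'), E. reflexivity. }
  split; [reflexivity | exact (Qgalois_right_unique SA H H')].
Qed.

End Galois.

Section Correspondences.
Variables X Y : QPreord Q.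
Local Notation rX := (@qp_rel _ X).
Local Notation rY := (@qp_rel _ Y).
Implicit Types (d : Distributors X Y).

Lemma distributor_Qrel d : is_Qrel (proj1_sig d).
Proof. exact (proj1 (proj2_sig d)). Qed.

Lemma distributor_closed_r d : rle (comp (proj1_sig d) rX) (proj1_sig d).
Proof.
  eapply rle_trans; [apply le_comp_Qpreorder_l, qp_ok | apply (proj2_sig d)].
Qed.

Lemma distributor_closed_l d : rle (comp rY (proj1_sig d)) (proj1_sig d).
Proof.
  eapply rle_trans; [| apply (proj2_sig d)].
  apply comp_mono_r, le_comp_Qpreorder_r; [apply qp_ok | apply distributor_Qrel].
Qed.

Lemma is_distributor_intro (phi : X -> Y -> Q) :
  is_Qrel phi -> rle (comp phi rX) phi -> rle (comp rY phi) phi -> is_distributor phi.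
Proof.
  intros Hphi Hr Hl. split; [exact Hphi |].
  eapply rle_trans; [apply comp_mono_r, Hr | exact Hl].
Qed.

Definition column d (y : Y) : PX X :=
  PX_of X (fun x (_ : one (ext y)) => proj1_sig d x y)
    (fun x _ => distributor_Qrel d x y) (fun x _ => distributor_closed_r d x y).

Definition row d (x : X) : PdX Y :=
  PdX_of Y (fun (_ : one (ext x)) y => proj1_sig d x y)
    (fun _ y => distributor_Qrel d x y) (fun _ y => distributor_closed_l d x y).

Lemma column_Qmono d : Qmono rY (@PX_rel _ X) (column d).
Proof.
  split; [reflexivity |]. intros y y'.
  refine (le_swarrow (pmu (column d y')) (pmu (column d y)) (fun _ _ => rY y y') _ _ tt tt).
  - intros t t'. apply qp_Qrel.
  - intros x t'. apply comp_le. intros t.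
    eapply qle_trans; [apply (le_comp rY (proj1_sig d) x y y') | apply distributor_closed_l].
Qed.

Lemma row_Qmono d : Qmono rX (@PdX_rel _ Y) (row d).
Proof.
  split; [reflexivity |]. intros x x'.
  refine (le_searrow (plam (row d x')) (plam (row d x)) (fun _ _ => rX x x') _ _ tt tt).
  - intros t t'. apply qp_Qrel.
  - intros t y. apply comp_le. intros t'.
    eapply qle_trans; [apply (le_comp (proj1_sig d) rX x x' y) | apply distributor_closed_r].
Qed.

Definition mono_of_dist d : MonoToP X Y := exist _ (column d) (column_Qmono d).

Definition monod_of_dist d : MonoToPd X Y := exist _ (row d) (row_Qmono d).

Lemma dist_of_mono_ok (h : MonoToP X Y) :
  is_distributor (fun x y => pmu (proj1_sig h y) x tt).
Proof.
  destruct h as [h [Eh Mh]]. simpl. apply is_distributor_intro.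
  - intros x y. rewrite <- (Eh y). apply (PX_Qrel _ (h y)).
  - intros x y. apply (PX_closed _ (h y)).
  - intros x y'. apply comp_le. intro y.
    eapply qle_trans; [| apply (PX_rel_mul_le _ (h y) (h y'))].
    apply qmul_le_l. rewrite <- (Eh y). apply qrdiv_le, Mh.
Qed.

Lemma dist_of_monod_ok (h : MonoToPd X Y) :
  is_distributor (fun x y => plam (proj1_sig h x) tt y).
Proof.
  destruct h as [h [Eh Mh]]. simpl. apply is_distributor_intro.
  - intros x y. rewrite <- (Eh x). apply (PdX_Qrel _ (h x)).
  - intros x y. apply comp_le. intro x'.
    eapply qle_trans; [| apply (PdX_rel_mul_le _ (h x) (h x'))].
    rewrite <- (Eh x'). apply qmul_le_r, Mh.
  - intros x y. apply (PdX_closed _ (h x)).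
Qed.

Definition dist_of_mono (h : MonoToP X Y) : Distributors X Y := exist _ _ (dist_of_mono_ok h).

Definition dist_of_monod (h : MonoToPd X Y) : Distributors X Y :=
  exist _ _ (dist_of_monod_ok h).

Lemma mono_of_distK d : dist_of_mono (mono_of_dist d) = d.
Proof. apply sig_irrelevant. reflexivity. Qed.

Lemma dist_of_monoK (h : MonoToP X Y) : mono_of_dist (dist_of_mono h) = h.
Proof.
  apply sig_irrelevant. apply functional_extensionality. intro y.
  apply PX_eq; [symmetry; apply (proj2_sig h) | reflexivity].
Qed.

Lemma monod_of_distK d : dist_of_monod (monod_of_dist d) = d.
Proof. apply sig_irrelevant. reflexivity. Qed.

Lemma dist_of_monodK (h : MonoToPd X Y) : monod_of_dist (dist_of_monod h) = h.
Proof.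
  apply sig_irrelevant. apply functional_extensionality. intro x.
  apply PdX_eq; [symmetry; apply (proj2_sig h) | reflexivity].
Qed.

Definition polar_l d (m : PX X) : PdX Y :=
  PdX_of Y (swarrow (proj1_sig d) (pmu m)) (swarrow_Qrel _ _)
    (swarrow_closed_l _ (qp_Qrel Y) _ _ (PX_Qrel _ m) (distributor_closed_l d)).

Definition polar_r d (l : PdX Y) : PX X :=
  PX_of X (searrow (plam l) (proj1_sig d)) (searrow_Qrel _ _)
    (searrow_closed_r _ (qp_Qrel X) _ _ (distributor_closed_r d)).

Lemma polar_galois d : Qgalois (@PX_rel _ X) (@PdX_rel _ Y) (polar_l d) (polar_r d).
Proof.
  split; [| split; [| split]].
  - split; [reflexivity |]. intros m m'.
    apply (le_searrow _ _ _ (swarrow_Qrel _ _)).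
    apply swarrow_comp; apply PX_Qrel.
  - split; [reflexivity |]. intros l l'.
    apply (le_swarrow _ _ _ (searrow_Qrel _ _)), searrow_comp.
  - intro m. apply PX_le_iff; [reflexivity |]. intro x.
    apply le_searrow_swarrow, PX_Qrel.
  - intro l. apply (PdX_le_iff _ (polar_l d (polar_r d l)) l eq_refl). intro y.
    apply le_swarrow_searrow, PdX_Qrel.
Qed.

Definition axial_l d (m : PX Y) : PX X :=
  PX_of X (comp (pmu m) (proj1_sig d)) (comp_Qrel _ _ (PX_Qrel _ m) (distributor_Qrel d))
    (comp_closed_r _ (qp_Qrel X) _ _ (distributor_Qrel d) (distributor_closed_r d)).

Definition axial_r d (m : PX X) : PX Y :=
  PX_of Y (swarrow (pmu m) (proj1_sig d)) (swarrow_Qrel _ _)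
    (swarrow_closed_r _ (qp_Qrel Y) _ _ (distributor_Qrel d) (distributor_closed_l d)).

Lemma axial_galois d : Qgalois (@PX_rel _ Y) (@PX_rel _ X) (axial_l d) (axial_r d).
Proof.
  split; [| split; [| split]].
  - split; [reflexivity |]. intros m m'.
    apply swarrow_le_comp; [apply PX_Qrel | apply distributor_Qrel].
  - split; [reflexivity |]. intros m m'.
    apply (le_swarrow _ _ _ (swarrow_Qrel _ _)).
    apply swarrow_comp; [apply PX_Qrel | apply distributor_Qrel].
  - intro m. apply PX_le_iff; [reflexivity |]. intro y.
    exact (le_swarrow_comp (pmu m) (proj1_sig d) (PX_Qrel _ m) y tt).
  - intro m. apply (PX_le_iff _ (axial_l d (axial_r d m)) m eq_refl). intro x.
    apply comp_swarrow_le, distributor_Qrel.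
Qed.

Definition dualaxial_l d (l : PdX Y) : PdX X :=
  PdX_of X (searrow (proj1_sig d) (plam l)) (searrow_Qrel _ _)
    (searrow_closed_l _ (qp_Qrel X) _ _ (distributor_closed_r d)).

Definition dualaxial_r d (l : PdX X) : PdX Y :=
  PdX_of Y (comp (proj1_sig d) (plam l)) (comp_Qrel _ _ (distributor_Qrel d) (PdX_Qrel _ l))
    (comp_closed_l _ _ _ (distributor_Qrel d) (PdX_Qrel _ l)
       (distributor_closed_l d)).

Lemma dualaxial_galois d :
  Qgalois (@PdX_rel _ Y) (@PdX_rel _ X) (dualaxial_l d) (dualaxial_r d).
Proof.
  split; [| split; [| split]].
  - split; [reflexivity |]. intros l l'.
    apply (le_searrow _ _ _ (searrow_Qrel _ _)), searrow_comp.
  - split; [reflexivity |]. intros l l'.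
    apply searrow_le_comp, PdX_Qrel.
  - intro l. apply PdX_le_iff; [reflexivity |]. intro y.
    apply comp_searrow_le.
  - intro l. apply (PdX_le_iff _ (dualaxial_l d (dualaxial_r d l)) l eq_refl). intro x.
    exact (le_searrow_comp (proj1_sig d) (plam l) (PdX_Qrel _ l) tt x).
Qed.

Definition polarity_of_dist d : Polarities X Y := exist _ (_, _) (polar_galois d).
Definition axiality_of_dist d : Axialities Y X := exist _ (_, _) (axial_galois d).
Definition dual_axiality_of_dist d : DualAxialities Y X := exist _ (_, _) (dualaxial_galois d).

Definition dist_of_polarity (p : Polarities X Y) : Distributors X Y :=
  dist_of_monod (exist _ _ (Qmono_comp (yo_Qmono X) (proj1 (proj2_sig p)))).

Definition dist_of_axiality (p : Axialities Y X) : Distributors X Y :=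
  dist_of_mono (exist _ _ (Qmono_comp (yo_Qmono Y) (proj1 (proj2_sig p)))).

Definition dist_of_dual_axiality (p : DualAxialities Y X) : Distributors X Y :=
  dist_of_monod (exist _ _ (Qmono_comp (coyo_Qmono X) (proj1 (proj2 (proj2_sig p))))).

Lemma polarity_of_distK d : dist_of_polarity (polarity_of_dist d) = d.
Proof.
  apply sig_irrelevant. apply functional_extensionality. intro x.
  apply functional_extensionality. intro y.
  exact (swarrow_yo X (proj1_sig d) x tt y (distributor_Qrel d) (distributor_closed_r d)).
Qed.

Lemma axiality_of_distK d : dist_of_axiality (axiality_of_dist d) = d.
Proof.
  apply sig_irrelevant. apply functional_extensionality. intro x.
  apply functional_extensionality. intro y.
  exact (comp_yo Y (proj1_sig d) x y tt (distributor_closed_l d)).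
Qed.

Lemma dual_axiality_of_distK d : dist_of_dual_axiality (dual_axiality_of_dist d) = d.
Proof.
  apply sig_irrelevant. apply functional_extensionality. intro x.
  apply functional_extensionality. intro y.
  exact (comp_coyo X (proj1_sig d) x tt y (distributor_Qrel d) (distributor_closed_r d)).
Qed.

Lemma dist_of_polarityK (p : Polarities X Y) : polarity_of_dist (dist_of_polarity p) = p.
Proof.
  destruct p as [[f g] H]. apply sig_irrelevant.
  destruct (Qgalois_eq_of_left_on (PX_Qpreorder X) (PdX_Qpreorder Y) (yo X) (PX_eq_yo X)
              (PdX_separated Y) (polar_galois (dist_of_polarity (exist _ (f, g) H))) H)
    as [Ef Eg]; [| exact (f_equal2 pair Ef Eg)].
  intro x. apply PdX_eq; [symmetry; apply (proj1 (proj1 H)) |]. intro y.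
  apply swarrow_yo; [apply distributor_Qrel | apply distributor_closed_r].
Qed.

Lemma dist_of_axialityK (p : Axialities Y X) : axiality_of_dist (dist_of_axiality p) = p.
Proof.
  destruct p as [[f g] H]. apply sig_irrelevant.
  destruct (Qgalois_eq_of_left_on (PX_Qpreorder Y) (PX_Qpreorder X) (yo Y) (PX_eq_yo Y)
              (PX_separated X) (axial_galois (dist_of_axiality (exist _ (f, g) H))) H)
    as [Ef Eg]; [| exact (f_equal2 pair Ef Eg)].
  intro y. apply PX_eq; [symmetry; apply (proj1 (proj1 H)) |]. intro x.
  apply comp_yo, distributor_closed_l.
Qed.

Lemma dist_of_dual_axialityK (p : DualAxialities Y X) :
  dual_axiality_of_dist (dist_of_dual_axiality p) = p.
Proof.
  destruct p as [[f g] H]. apply sig_irrelevant.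
  destruct (Qgalois_eq_of_right_on (PdX_Qpreorder Y) (PdX_Qpreorder X) (coyo X)
              (PdX_eq_coyo X) (PdX_separated Y)
              (dualaxial_galois (dist_of_dual_axiality (exist _ (f, g) H))) H)
    as [Ef Eg]; [| exact (f_equal2 pair Ef Eg)].
  intro x. apply PdX_eq; [symmetry; apply (proj1 (proj1 (proj2 H))) |]. intro y.
  apply comp_coyo; [apply distributor_Qrel | apply distributor_closed_r].
Qed.

Lemma InBij_dist_mono : InBij (Distributors X Y) (MonoToP X Y).
Proof. exact (InBij_intro _ _ mono_of_distK dist_of_monoK). Qed.

Lemma InBij_dist_monod : InBij (Distributors X Y) (MonoToPd X Y).
Proof. exact (InBij_intro _ _ monod_of_distK dist_of_monodK). Qed.

Lemma InBij_dist_polarity : InBij (Distributors X Y) (Polarities X Y).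
Proof. exact (InBij_intro _ _ polarity_of_distK dist_of_polarityK). Qed.

Lemma InBij_dist_axiality : InBij (Distributors X Y) (Axialities Y X).
Proof. exact (InBij_intro _ _ axiality_of_distK dist_of_axialityK). Qed.

Lemma InBij_dist_dual_axiality : InBij (Distributors X Y) (DualAxialities Y X).
Proof. exact (InBij_intro _ _ dual_axiality_of_distK dist_of_dual_axialityK). Qed.

End Correspondences.
End Quantale.

Theorem theorem4p24 (Q : Quantale) (Hnontriv : qlt (qbot Q) (qe Q))
  (X Y : QPreord Q) :
  let A := Distributors X Y in
  let B := MonoToP X Y in
  let C := MonoToPd X Y in
  let D := Polarities X Y in
  let E := Axialities Y X in
  let F := DualAxialities Y X in
  InBij A B /\ InBij A C /\ InBij A D /\ InBij A E /\ InBij A F /\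
  InBij B C /\ InBij B D /\ InBij B E /\ InBij B F /\
  InBij C D /\ InBij C E /\ InBij C F /\
  InBij D E /\ InBij D F /\
  InBij E F.
Proof.
  intros A B C D E F.
  pose proof (InBij_dist_mono _ X Y) as AB.
  pose proof (InBij_dist_monod _ X Y) as AC.
  pose proof (InBij_dist_polarity _ X Y) as AD.
  pose proof (InBij_dist_axiality _ X Y) as AE.
  pose proof (InBij_dist_dual_axiality _ X Y) as AF.
  assert (through_A : forall U V, InBij A U -> InBij A V -> InBij U V)
    by (intros U V HU HV; exact (InBij_trans (InBij_sym HU) HV)).
  repeat split; auto.
Qed.
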